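(* Let $(\nu_1,\ldots,\nu_r)\in(\underline{\Lambda}^r_n)_0$. Then $L^{(\nu_1,\ldots,\nu_r)}\cong\Delta^{(\nu_1,\ldots,\nu_r)}$ (i.e. the cell form of $\Delta^{(\nu_1,\ldots,\nu_r)}$ is nondegenerate) if and only if $D^{\nu_i}\cong S^{\nu_i}$ for every $i=1,\ldots,r$, and $L^{\lambda_i}\cong\Delta^{\lambda_i}$ for every $i$ with $\nu_i\ne()$.
   Context: $k$ is a field of characteristic $p\ge0$. $A$ is a cellular algebra with totally ordered cell indices $\lambda_1>\cdots>\lambda_r$, cell modules $\Delta^\lambda$ with cell forms, $\Lambda_0$ the set of $\lambda$ whose cell form is nonzero and $L^\lambda=\Delta^\lambda/\mathrm{rad}$. For a partition $\nu$ of $m$, $S^\nu$ is the cell module of $kS_m$ in its standard cellular structure (dual of James's Specht module) and, for $\nu$ $p$-restricted, $D^\nu$ is its quotient by the radical of its cell form. $A\wr S_n$ is $kS_n\otimes A^{\otimes n}$ with product $(\sigma;a)(\pi;b)=(\sigma\pi;a_{(1)\pi^{-1}}b_1,\ldots,a_{(n)\pi^{-1}}b_n)$ (permutations act on the right). It is cellular with anti-involution $(\sigma;a_1,\ldots,a_n)^*=(\sigma^{-1};a^*_{(1)\sigma},\ldots,a^*_{(n)\sigma})$ and cell indices the length-$r$ multipartitions of $n$; for $\mu=(|\nu_1|,\ldots,|\nu_r|)$ the cell module is $\Delta^{(\nu_1,\ldots,\nu_r)}=(\Delta(\lambda_1)^{\otimes\mu_1}\otimes\cdots\otimes\Delta(\lambda_r)^{\otimes\mu_r}\otimes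 S^{\nu_1}\otimes\cdots\otimes S^{\nu_r})\otimes_{A\wr S_\mu}A\wr S_n$ (where $A\wr S_\mu$, spanned by $(\sigma;a)$ with $\sigma$ in the Young subgroup $S_\mu$, acts by $(x_1\otimes\cdots\otimes x_n\otimes y_1\otimes\cdots\otimes y_r)(\sigma;a_1,\ldots,a_n)=x_{(1)\sigma^{-1}}a_1\otimes\cdots\otimes x_{(n)\sigma^{-1}}a_n\otimes y_1\sigma_1\otimes\cdots\otimes y_r\sigma_r$), with cell form $\langle x\otimes y\otimes\gamma,x'\otimes y'\otimes\gamma'\rangle=\delta_{\gamma\gamma'}\prod_i\langle y_i,y'_i\rangle\prod_j\langle x_j,x'_j\rangle$ for $\gamma,\gamma'$ minimal-length right coset representatives of $S_\mu$ in $S_n$. $(\underline{\Lambda}^r_n)_0$ is the set of multipartitions whose cell form is nonzero and $L^{(\nu_1,\ldots,\nu_r)}$ is $\Delta^{(\nu_1,\ldots,\nu_r)}$ modulo the radical of its cell form. *)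

From HB Require Import structures.
From mathcomp Require Import all_boot all_order all_fingroup all_algebra all_solvable all_field.
Set Implicit Arguments. Unset Strict Implicit. Unset Printing Implicit Defensive.
Import GRing.Theory.
Local Open Scope ring_scope.

Section Generic.
Variable k : fieldType.

(** Coefficient of the vector [x] in the expansion of [v] along the sequence [X]
    (meaningful when [X] is a basis and [x] occurs in it). *)
Definition coef (vT : vectType k) (X : seq vT) (x v : vT) : k :=
  \sum_(j < size X | nth 0 X j == x) coord (in_tuple X) j v.

(** A bilinear form on the space with basis indexed by [D] (given by its values
    [B a b] on basis vectors) is nondegenerate iff its radical is zero. *)
Definition form_nondeg (T : finType) (D : {set T}) (B : T -> T -> k) : Prop :=
  forall f : T -> k,
    (forall b, b \in D -> \sum_(a in D) f a * B a b = 0) ->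
    forall a, a \in D -> f a = 0.

Definition form_nonzero (T : finType) (D : {set T}) (B : T -> T -> k) : Prop :=
  exists a b, [/\ a \in D, b \in D & B a b != 0].
End Generic.

(** ** Cellular algebras (Graham--Lehrer), cell indices lambda_1 > ... > lambda_r
    encoded as i : 'I_r (smaller ordinal = larger cell index), M(lambda_i) = 'I_(dim i). *)
Record cellular_datum (k : fieldType) (A : falgType k) := CellularDatum {
  cd_r : nat;
  cd_dim : 'I_cd_r -> nat;
  cd_C : forall i : 'I_cd_r, 'I_(cd_dim i) -> 'I_(cd_dim i) -> A;
  cd_star : A -> A }.
Arguments cd_r {k A} c.
Arguments cd_dim {k A} c i.
Arguments cd_C {k A} c i s t.
Arguments cd_star {k A} c a.

Section Cellular.
Variables (k : fieldType) (A : falgType k) (cd : cellular_datum A).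
Local Notation r := (cd_r cd).
Local Notation d := (cd_dim cd).
Local Notation C := (cd_C cd).
Local Notation star := (cd_star cd).

Definition cell_basis : seq A :=
  flatten [seq flatten [seq [seq C i s t | t <- enum 'I_(d i)] | s <- enum 'I_(d i)] | i <- enum 'I_r].

(** A(> lambda_i): span of the C^{lambda_j}_{st} with lambda_j > lambda_i, i.e. j < i. *)
Definition higher (i : 'I_r) : {vspace A} :=
  <<flatten [seq flatten [seq [seq C j s t | t <- enum 'I_(d j)] | s <- enum 'I_(d j)]
            | j <- [seq j : 'I_r <- enum 'I_r | (val j < val i)%N]]>>%VS.

Definition is_cellular : Prop :=
  [/\ (forall (c : k) (a b : A), star (c *: a + b) = c *: star a + star b),
      (forall a b : A, star (a * b) = star b * star a),
      (forall a : A, star (star a) = a),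
      basis_of fullv cell_basis &
      (forall i s t, star (C i s t) = C i t s) /\
      (forall i (t : 'I_(d i)) (a : A), exists rr : 'I_(d i) -> k,
          forall s, C i s t * a - \sum_(v < d i) rr v *: C i s v \in higher i)].

(** The cell form on Delta(lambda_i):  C_{tt} C_{uu} = <t,u> C_{tu}  mod A(>lambda_i). *)
Definition cell_form (i : 'I_r) (t u : 'I_(d i)) : k :=
  coef cell_basis (C i t u) (C i t t * C i u u).

(** L^{lambda_i} = Delta^{lambda_i}, i.e. the cell form of Delta(lambda_i) is nondegenerate. *)
Definition cell_nondeg (i : 'I_r) : Prop := form_nondeg [set: 'I_(d i)] (@cell_form i).
End Cellular.
Arguments cell_form {k A} cd i t u.
Arguments cell_nondeg {k A} cd i.
Arguments is_cellular {k A} cd.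
Arguments higher {k A} cd i.

Definition is_partition (la : seq nat) : bool :=
  sorted geq la && all (fun x => 0 < x)%N la.

Fixpoint parts_aux (f m b : nat) : seq (seq nat) :=
  if m is 0 then [:: [::]] else
  if f is f'.+1 then
    flatten [seq [seq j :: p | p <- parts_aux f' (m - j) j] | j <- iota 1 (minn m b)]
  else [::].

Definition partitions (m : nat) : seq (seq nat) := parts_aux m m m.

(** Positions 0..m-1 of the boxes of [la] numbered along rows (initial tableau t^la). *)
Definition rowstart (la : seq nat) (i : nat) : nat := sumn (take i la).
Definition row_of (la : seq nat) (p : nat) : nat :=
  count (fun i => rowstart la i.+1 <= p)%N (iota 0 (size la)).
Definition col_of (la : seq nat) (p : nat) : nat := (p - rowstart la (row_of la p))%N.

Section Symmetric.
Variables (k : fieldType) (m : nat).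

Definition young_row (la : seq nat) (w : 'S_m) : bool :=
  [forall p : 'I_m, row_of la (w p) == row_of la p].

(** A tableau of shape la is t^la d (entry d(p) in box p); it is standard iff
    entries increase along rows and down columns.  Std(la) = {d | t^la d standard}. *)
Definition standard (la : seq nat) (d : 'S_m) : bool :=
  [forall p : 'I_m, forall q : 'I_m,
     (((row_of la q == row_of la p) && (col_of la q == (col_of la p).+1)) ||
      ((row_of la q == (row_of la p).+1) && (col_of la q == col_of la p)))
     ==> (d p < d q)%N].

Definition std (la : seq nat) : {set 'S_m} := [set d | standard la d].

(** The group algebra k S_m, elements as coefficient row vectors;
    product (sigma pi) : i |-> (i sigma) pi  (permutations act on the right). *)
Definition GA := 'rV[k]_#|{perm 'I_m}|.
Definition gelt (g : 'S_m) : GA := delta_mx 0 (enum_rank g).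
Definition gmul (f g : GA) : GA :=
  \sum_(a : 'S_m) \sum_(b : 'S_m) (f 0 (enum_rank a) * g 0 (enum_rank b)) *: gelt (a * b).

Definition xrow (la : seq nat) : GA := \sum_(w : 'S_m | young_row la w) gelt w.

(** Murphy basis element m_{st} = d(s)^* x_la d(t), with w^* = w^-1. *)
Definition murphy (la : seq nat) (s t : 'S_m) : GA :=
  gmul (gmul (gelt s^-1) (xrow la)) (gelt t).

Definition murphy_basis : seq GA :=
  flatten [seq flatten [seq [seq murphy la s t | t <- enum (std la)] | s <- enum (std la)]
          | la <- partitions m].

(** Cell form of S^la:  m_{1 t} m_{u 1} = <t,u> m_{11} mod higher shapes. *)
Definition specht_form (la : seq nat) (t u : 'S_m) : k :=
  coef murphy_basis (murphy la 1 1) (gmul (murphy la 1 t) (murphy la u 1)).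
End Symmetric.

(** D^la = S^la, i.e. the cell form of S^la is nondegenerate. *)
Definition specht_nondeg (k : fieldType) (la : seq nat) : Prop :=
  form_nondeg (std (sumn la) la) (@specht_form k (sumn la) la).

Section Wreath.
Variables (k : fieldType) (A : falgType k) (cd : cellular_datum A).
Variables (n : nat) (nu : 'I_(cd_r cd) -> seq nat).
Local Notation r := (cd_r cd).
Local Notation d := (cd_dim cd).
Definition wmu (i : 'I_r) : nat := sumn (nu i).

Definition in_block (i : 'I_r) (j : nat) : bool :=
  (\sum_(i' < r | (i' < i)%N) wmu i' <= j < \sum_(i' < r | (i' <= i)%N) wmu i')%N.

Definition young_mu (w : 'S_n) : bool :=
  [forall j : 'I_n, forall i : 'I_r, in_block i (w j) == in_block i j].

Definition perm_length (w : 'S_n) : nat :=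
  #|[set p : 'I_n * 'I_n | (p.1 < p.2)%N && (w p.2 < w p.1)%N]|.

Definition coset_reps : {set 'S_n} :=
  [set g : 'S_n | [forall w : 'S_n, young_mu w ==> (perm_length g <= perm_length (w * g))%N]].

Definition Xtype := {ffun 'I_n -> {i : 'I_r & 'I_(d i)}}.
Definition Ytype := {dffun forall i : 'I_r, 'S_(wmu i)}.
Definition Wtype := (Xtype * Ytype * 'S_n)%type.

(** Basis x_1 (x) ... (x) x_n (x) y_1 (x) ... (x) y_r (x) gamma of Delta^{(nu_1,...,nu_r)}. *)
Definition wbasis : {set Wtype} :=
  [set b : Wtype | [&& [forall j : 'I_n, in_block (tag (b.1.1 j)) j],
                      [forall i : 'I_r, b.1.2 i \in std (wmu i) (nu i)] & b.2 \in coset_reps]].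

Definition tag_form (a b : {i : 'I_r & 'I_(d i)}) : k :=
  if tag a == tag b then cell_form cd (tag a) (tagged a) (tagged_as a b) else 0.

Definition wreath_form (b b' : Wtype) : k :=
  (b.2 == b'.2)%:R *
  (\prod_(i < r) specht_form k (nu i) (b.1.2 i) (b'.1.2 i)) *
  (\prod_(j < n) tag_form (b.1.1 j) (b'.1.1 j)).

(** (nu_1,...,nu_r) in (Lambda^r_n)_0. *)
Definition wreath_Lambda0 : Prop := form_nonzero wbasis wreath_form.
(** L^{(nu)} = Delta^{(nu)}. *)
Definition wreath_nondeg : Prop := form_nondeg wbasis wreath_form.
End Wreath.
Arguments wreath_Lambda0 {k A} cd n nu.
Arguments wreath_nondeg {k A} cd n nu.

From Pilot Require Import Defs.
From HB Require Import structures.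
From mathcomp Require Import all_boot all_order all_fingroup all_algebra all_solvable all_field.
From mathcomp Require Import ring.
Set Implicit Arguments. Unset Printing Implicit Defensive.
Import GRing.Theory.
Local Open Scope ring_scope.

(** On the basis x (x) y (x) gamma the cell form of Delta^(nu) is a product of
    three forms: the n-fold product of cell forms of A on the x-coordinates, the
    r-fold product of Specht forms on the y-coordinates, and the Kronecker delta
    on the coset representatives gamma.  The proof is linear algebra of forms
    given by their Gram values on finite index sets:
    - a product of forms on a product of nonempty index sets is nondegenerate iff
      every factor is ([tensor_form_nondeg] for two factors, [prod_form_nondeg]
      for a family, the latter via dual bases); the delta form is nondegenerate;
    - the x-factor at position j is, up to relabelling, the cell form of
      Delta(lambda_i) for the unique block i containing j, and block i is
      nonempty exactly when nu_i <> () ([block_factors_nondeg]);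
    - (nu) in (Lambda^r_n)_0 provides a basis element, so all index sets are
      nonempty. *)

Section BilinearForms.
Variable k : fieldType.

Lemma form_nondeg_ext (T : finType) (D : {set T}) (B B' : T -> T -> k) :
  {in D &, forall a b, B a b = B' a b} ->
  form_nondeg D B -> form_nondeg D B'.
Proof.
move=> eqB ndB f Hf; apply: ndB => b bD; rewrite -[RHS](Hf b bD).
by apply: eq_bigr => a aD; rewrite eqB.
Qed.

Lemma form_nondeg_image (U T : finType) (h : U -> T) (D : {set U})
    (B : T -> T -> k) (B' : U -> U -> k) :
  injective h -> {in D &, forall u v, B (h u) (h v) = B' u v} ->
  form_nondeg (h @: D) B <-> form_nondeg D B'.
Proof.
move=> h_inj hB; have sum_img (F : T -> k) : \sum_(t in h @: D) F t = \sum_(u in D) F (h u).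
  by rewrite big_imset //= => u v _ _ /h_inj.
split=> [nd f Hf u uD | nd f Hf _ /imsetP[u uD ->]].
- pose g t := \sum_(w in D | h w == t) f w.
  have g_h w : w \in D -> g (h w) = f w.
    move=> wD; rewrite /g (big_pred1 w) // => w'.
    by apply/andP/eqP => [[_ /eqP/h_inj] | ->]; rewrite ?eqxx.
  rewrite -g_h //; apply: nd (imset_f _ uD) => _ /imsetP[v vD ->].
  rewrite sum_img -[RHS](Hf v vD).
  by apply: eq_bigr => w wD; rewrite g_h // hB.
- apply: (nd (f \o h)) => // v vD; rewrite -[RHS](Hf (h v) (imset_f _ vD)) sum_img.
  by apply: eq_bigr => w wD; rewrite hB.
Qed.

Lemma delta_form_nondeg (T : finType) (D : {set T}) :
  form_nondeg D (fun a b => (a == b)%:R : k).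
Proof.
move=> f Hf a aD; rewrite -(Hf a aD) (bigD1 a) //= eqxx mulr1 big1 ?addr0 //.
by move=> b /andP[_ /negbTE ->]; rewrite mulr0.
Qed.

Section Gram.
Variables (T : finType) (D : {set T}) (B : T -> T -> k).

Definition gram : 'M[k]_#|D| := \matrix_(i, j) B (enum_val i) (enum_val j).

Lemma gram_unit : form_nondeg D B -> gram \in unitmx.
Proof.
move=> nd; rewrite -row_free_unit -kermx_eq0; apply/eqP/matrixP => i j.
have Dj := enum_valP j; rewrite [RHS]mxE.
have ker_i : row i (kermx gram) *m gram = 0 by rewrite -row_mul mulmx_ker row0.
pose f x := if x \in D then kermx gram i (enum_rank_in Dj x) else 0.
have := nd f _ (enum_val j) Dj; rewrite /f Dj enum_valK_in; apply=> b bD.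
rewrite (big_enum_val (fun x => (if x \in D then _ else 0) * B x b)) /=.
have := congr1 (fun v : 'rV_#|D| => v 0 (enum_rank_in Dj b)) ker_i.
rewrite !mxE => ker_ib; rewrite -[RHS]ker_ib.
by apply: eq_bigr => l _; rewrite enum_valP enum_valK_in !mxE enum_rankK_in.
Qed.

Lemma form_nondeg_dual : form_nondeg D B -> forall a, a \in D ->
  {c : T -> k | forall a', a' \in D -> \sum_(b in D) B a' b * c b = (a' == a)%:R}.
Proof.
move=> nd a aD; pose c b := invmx gram (enum_rank_in aD b) (enum_rank_in aD a).
exists c => a' a'D; rewrite (big_enum_val (fun b => B a' b * c b)) /=.
have inj_rank : {in D &, injective (enum_rank_in aD)}.
  by move=> x y xD yD /(congr1 enum_val); rewrite !enum_rankK_in.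
have := congr1 (fun M : 'M_#|D| => M (enum_rank_in aD a') (enum_rank_in aD a))
  (mulmxV (gram_unit nd)).
rewrite /= !mxE (inj_in_eq inj_rank) // => <-.
by apply: eq_bigr => j _; rewrite mxE enum_rankK_in // /c enum_valK_in.
Qed.
End Gram.

Lemma sum_setXn_prod (R : comNzRingType) (I : finType) (T : I -> finType)
    (D : forall i, {set T i}) (h : forall i, T i -> R) :
  \sum_(y in setXn D) \prod_i h i (y i) = \prod_i \sum_(b in D i) h i b.
Proof.
pose P_ i := [ffun b => if b \in D i then h i b else 0].
transitivity (\sum_(y : {dffun forall i, T i}) \prod_i P_ i (y i)).
  rewrite big_mkcond /=; apply: eq_bigr => y _.
  case: (boolP (y \in setXn D)) => [/setXnP yD | ].
    by apply: eq_bigr => i _; rewrite ffunE yD.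
  rewrite in_setXn => /forallPn[i ni].
  by rewrite (bigD1 i) //= ffunE (negbTE ni) mul0r.
transitivity (\sum_(t : fprod T) \prod_(i in I) P_ i (t i)).
  rewrite (reindex (@dffun_of_fprod I T)) /=; last exact/onW_bij/dffun_of_fprod_bij.
  by apply: eq_bigr => t _; apply: eq_bigr => i _; rewrite /dffun_of_fprod !ffunE.
rewrite big_fprod.
transitivity (\sum_(g in family (tagged_with T)) \prod_i untag 0 (P_ i) (g i)); first by [].
transitivity (\prod_i \sum_(j | tagged_with T i j) untag 0 (P_ i) j).
  by rewrite bigA_distr_big_dep.
apply: eq_bigr => i _.
rewrite -(big_tag (fun i => P_ i)) [RHS]big_mkcond /=.
by apply: eq_bigr => b _; rewrite ffunE.
Qed.

Lemma prod_eq_indicator (I : finType) (T : I -> finType) (x y : {dffun forall i, T i}) :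
  \prod_i ((x i == y i)%:R : k) = (x == y)%:R.
Proof.
have [/forallP exy | /forallPn[i ni]] := boolP [forall i, x i == y i].
  have -> : x = y by apply/ffunP => i; apply/eqP.
  by rewrite eqxx big1 // => i _; rewrite eqxx.
rewrite (bigD1 i) //= (negbTE ni) mul0r; case: eqP => // exy.
by rewrite exy eqxx in ni.
Qed.

Section ProductForm.
Variables (I : finType) (T : I -> finType) (D : forall i, {set T i})
  (B : forall i, T i -> T i -> k).

Definition prod_form (x y : {dffun forall i, T i}) : k := \prod_(i : I) B i (x i) (y i).

(** Nondegenerate factors give a nondegenerate product: pair with dual vectors. *)
Lemma prod_form_nondeg_of_factors :
  (forall i, form_nondeg (D i) (B i)) -> form_nondeg (setXn D) prod_form.
Proof.
move=> nd f Hf x xD; have xiD := setXnP xD.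
pose c i := sval (form_nondeg_dual (nd i) (xiD i)).
have cP i := svalP (form_nondeg_dual (nd i) (xiD i)).
have pair_dual z : z \in setXn D ->
    \sum_(y in setXn D) prod_form z y * \prod_i c i (y i) = (z == x)%:R.
  move=> /setXnP zD; rewrite -prod_eq_indicator.
  transitivity (\sum_(y in setXn D) \prod_i (B i (z i) (y i) * c i (y i))).
    by apply: eq_bigr => y _; rewrite big_split.
  rewrite (@sum_setXn_prod k _ _ D (fun i b => B i (z i) b * c i b)).
  by apply: eq_bigr => i _; rewrite cP.
have sum0 : \sum_(y in setXn D)
    (\sum_(z in setXn D) f z * prod_form z y) * \prod_i c i (y i) = 0.
  by rewrite big1 // => y yD; rewrite Hf // mul0r.
rewrite -[RHS]sum0; under eq_bigr do rewrite big_distrl /=.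
rewrite exchange_big /=.
transitivity (\sum_(z in setXn D) f z * (z == x)%:R).
  rewrite (bigD1 x) //= eqxx mulr1 big1 ?addr0 // => z /andP[_ /negbTE ->].
  by rewrite mulr0.
apply: eq_bigr => z zD.
by rewrite -pair_dual // big_distrr; apply: eq_bigr => y _; rewrite /= mulrA.
Qed.

(** Conversely each factor of a nondegenerate product over a nonempty index set
    is nondegenerate: vary the i-th coordinate of a fixed tuple x0. *)
Lemma prod_form_nondeg_factor (x0 : {dffun forall i, T i}) : x0 \in setXn D ->
  form_nondeg (setXn D) prod_form -> forall i, form_nondeg (D i) (B i).
Proof.
move=> x0D nd i0 g Hg a aD.
pose upd (b : T i0) : {dffun forall i, T i} := [ffun j => dfwith x0 b j].
have upd_i0 b : upd b i0 = b by rewrite ffunE dfwith_in.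
have upd_D b : b \in D i0 -> upd b \in setXn D.
  move=> bD; apply/setXnP => j; rewrite ffunE; case: dfwithP => // j' _.
  exact: (setXnP x0D).
pose f (z : {dffun forall i, T i}) := g (z i0) * (z == upd (z i0))%:R.
have := nd f _ (upd a) (upd_D a aD); rewrite /f upd_i0 eqxx mulr1; apply=> y yD.
pose K := \prod_(i | i != i0) B i (x0 i) (y i).
transitivity (\sum_(b in D i0) \sum_(z in setXn D) (z == upd b)%:R * (g (z i0) * prod_form z y)).
  rewrite exchange_big; apply: eq_bigr => z zD.
  rewrite (bigD1 (z i0)) /=; last exact: (setXnP zD).
  rewrite [X in _ + X]big1 ?addr0; first by rewrite mulrAC mulrC.
  move=> b /andP[_ nb]; case: eqP => [ez|]; last by rewrite mul0r.
  by rewrite ez upd_i0 eqxx in nb.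
transitivity (\sum_(b in D i0) g b * B i0 b (y i0) * K).
  apply: eq_bigr => b bD.
  rewrite (bigD1 (upd b)) ?upd_D //= eqxx mul1r big1 ?addr0.
    rewrite upd_i0 /prod_form (bigD1 i0) //= upd_i0 mulrA; congr (_ * _).
    by apply: eq_bigr => i ni; rewrite ffunE dfwith_out // eq_sym.
  by move=> z /andP[_ /negbTE ->]; rewrite mul0r.
by rewrite -big_distrl /= Hg ?mul0r //; exact: (setXnP yD).
Qed.

Lemma prod_form_nondeg (x0 : {dffun forall i, T i}) : x0 \in setXn D ->
  form_nondeg (setXn D) prod_form <-> forall i, form_nondeg (D i) (B i).
Proof.
move=> x0D; split; [exact: prod_form_nondeg_factor x0D | exact: prod_form_nondeg_of_factors].
Qed.
End ProductForm.

Section TensorForm.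
Variables (T1 T2 : finType) (D1 : {set T1}) (D2 : {set T2})
  (B1 : T1 -> T1 -> k) (B2 : T2 -> T2 -> k).

Definition tensor_form (p q : T1 * T2) : k := B1 p.1 q.1 * B2 p.2 q.2.

Lemma sum_setX (F : T1 * T2 -> k) :
  \sum_(p in setX D1 D2) F p = \sum_(a in D1) \sum_(b in D2) F (a, b).
Proof.
rewrite pair_big_dep /=; apply: eq_big => [[a b] | [a b] _] //=.
by rewrite in_setX.
Qed.

(** Nondegenerate factors give a nondegenerate tensor product: first cancel the
    pairing with the first factor, then with the second. *)
Lemma tensor_form_nondeg_of_factors :
  form_nondeg D1 B1 -> form_nondeg D2 B2 -> form_nondeg (setX D1 D2) tensor_form.
Proof.
move=> nd1 nd2 f Hf [a1 a2] /setXP[a1D a2D].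
apply: (nd2 (fun x => f (a1, x))) => // b2 b2D.
apply: (nd1 (fun a => \sum_(a2 in D2) f (a, a2) * B2 a2 b2)) _ _ a1D => b1 b1D.
rewrite -[RHS](Hf (b1, b2)) ?in_setX ?b1D //.
rewrite sum_setX; apply: eq_bigr => x _; rewrite big_distrl /=.
by apply: eq_bigr => y _; rewrite /tensor_form /= mulrAC mulrA.
Qed.

(** A nondegenerate tensor product has nondegenerate factors (D1, D2 nonempty):
    test against vectors supported on a single value of the other coordinate. *)
Lemma tensor_form_nondeg_l x2 : x2 \in D2 ->
  form_nondeg (setX D1 D2) tensor_form -> form_nondeg D1 B1.
Proof.
move=> x2D nd g Hg a aD.
have := nd (fun p => g p.1 * (p.2 == x2)%:R) _ (a, x2).
rewrite in_setX aD x2D eqxx mulr1 /=; apply=> // -[b1 b2] /setXP[b1D b2D].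
rewrite sum_setX.
transitivity (\sum_(a1 in D1) g a1 * B1 a1 b1 * B2 x2 b2).
  apply: eq_bigr => a1 _; rewrite (bigD1 x2) //= eqxx mulr1 big1 ?addr0.
    by rewrite /tensor_form /= mulrA.
  by move=> z /andP[_ /negbTE ->]; rewrite mulr0 mul0r.
by rewrite -big_distrl /= Hg ?mul0r.
Qed.

Lemma tensor_form_nondeg_r x1 : x1 \in D1 ->
  form_nondeg (setX D1 D2) tensor_form -> form_nondeg D2 B2.
Proof.
move=> x1D nd g Hg a aD.
have := nd (fun p => g p.2 * (p.1 == x1)%:R) _ (x1, a).
rewrite in_setX aD x1D eqxx mulr1 /=; apply=> // -[b1 b2] /setXP[b1D b2D].
rewrite sum_setX (bigD1 x1) //= [X in _ + X]big1 ?addr0; last first.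
  by move=> z /andP[_ /negbTE nz]; apply: big1 => y _; rewrite nz mulr0 mul0r.
transitivity (\sum_(a2 in D2) g a2 * B2 a2 b2 * B1 x1 b1).
  by apply: eq_bigr => a2 _; rewrite eqxx mulr1 /tensor_form /=; ring.
by rewrite -big_distrl /= Hg ?mul0r.
Qed.

Lemma tensor_form_nondeg x1 x2 : x1 \in D1 -> x2 \in D2 ->
  form_nondeg (setX D1 D2) tensor_form <-> form_nondeg D1 B1 /\ form_nondeg D2 B2.
Proof.
move=> x1D x2D; split=> [nd | [nd1 nd2]]; last exact: tensor_form_nondeg_of_factors.
by split; [exact: tensor_form_nondeg_l x2D nd | exact: tensor_form_nondeg_r x1D nd].
Qed.
End TensorForm.
End BilinearForms.
Arguments prod_form {k I T} B x y.
Arguments tensor_form {k T1 T2} B1 B2 p q.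
Arguments prod_form_nondeg {k I T D} B {x0}.
Arguments tensor_form_nondeg {k T1 T2 D1 D2} B1 B2 {x1 x2}.

Lemma sumn_partition_gt0 {la : seq nat} :
  is_partition la -> la != [::] -> (0 < sumn la)%N.
Proof.
by case: la => [|a s] //= /andP[_ /andP[a_gt0 _]] _; rewrite addn_gt0 a_gt0.
Qed.

Section WreathCellForm.
Variables (k : fieldType) (A : falgType k) (cd : cellular_datum A)
  (n : nat) (nu : 'I_(cd_r cd) -> seq nat).
Local Notation r := (cd_r cd).
Local Notation d := (cd_dim cd).
Local Notation wmu := (@wmu k A cd nu).
Local Notation in_block := (@in_block k A cd nu).

Definition block_start (i : 'I_r) : nat := \sum_(i' < r | (i' < i)%N) wmu i'.
Definition block_end (i : 'I_r) : nat := \sum_(i' < r | (i' <= i)%N) wmu i'.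

Lemma block_endE i : block_end i = (block_start i + wmu i)%N.
Proof.
rewrite /block_end (bigD1 i) //= addnC; congr (_ + _)%N.
by apply: eq_bigl => i'; rewrite ltn_neqAle andbC.
Qed.

Lemma block_end_le_start {i i' : 'I_r} : (i < i')%N -> (block_end i <= block_start i')%N.
Proof.
move=> lt_ii'; rewrite /block_end /block_start !(big_mkcond (fun x : 'I_r => (x <= _)%N))
  (big_mkcond (fun x : 'I_r => (x < _)%N)) /=.
by apply: leq_sum => l _; case: ifP => // l_le; rewrite (leq_ltn_trans l_le lt_ii').
Qed.

Lemma in_block_uniq {i i' : 'I_r} {j : nat} : in_block i j -> in_block i' j -> i = i'.
Proof.
rewrite /Defs.in_block -/(block_start i) -/(block_end i) -/(block_start i') -/(block_end i').
move=> /andP[ge_i lt_i] /andP[ge_i' lt_i'].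
case: (ltngtP i i') => [lt | lt | /val_inj //].
  by have := leq_trans (block_end_le_start lt) ge_i'; rewrite leqNgt lt_i.
by have := leq_trans (block_end_le_start lt) ge_i; rewrite leqNgt lt_i'.
Qed.

Lemma in_block_size_gt0 {i : 'I_r} {j : nat} : in_block i j -> (0 < wmu i)%N.
Proof.
rewrite /Defs.in_block -/(block_start i) -/(block_end i) block_endE => /andP[ge lt].
by move: (leq_ltn_trans ge lt); rewrite -{1}(addn0 (block_start i)) ltn_add2l.
Qed.

(** Conversely, since the sizes add up to n, a block of positive size contains a
    position of 'I_n (namely its first one). *)
Lemma block_nonempty {i : 'I_r} : (\sum_(i' < r) wmu i')%N = n -> (0 < wmu i)%N ->
  exists j : 'I_n, in_block i j.
Proof.
move=> sum_n wmu_gt0.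
have start_lt : (block_start i < block_end i)%N.
  by rewrite block_endE -{1}(addn0 (block_start i)) ltn_add2l.
have start_n : (block_start i < n)%N.
  apply: (leq_trans start_lt); rewrite -sum_n /block_end.
  by rewrite (big_mkcond (fun x : 'I_r => (x <= _)%N)); apply: leq_sum => l _; case: ifP.
by exists (Ordinal start_n); rewrite /Defs.in_block -/(block_start i) -/(block_end i) /= leqnn.
Qed.

(** Index sets of the factors: at position j the admissible cell-basis labels
    (i, t) of A with j in block i; at i the standard tableaux Std(nu_i); the
    coset representatives carry the Kronecker delta form. *)
Definition Sig := {i : 'I_r & 'I_(d i)}.
Definition block_dom (j : 'I_n) : {set Sig} := [set a | in_block (tag a) j].
Definition specht_dom (i : 'I_r) : {set 'S_(wmu i)} := std (wmu i) (nu i).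
Definition coset_form (g g' : 'S_n) : k := (g == g')%:R.

Definition factor_form : @Wtype k A cd n nu -> @Wtype k A cd n nu -> k :=
  tensor_form (tensor_form (prod_form (fun j : 'I_n => @tag_form k A cd))
                           (prod_form (fun i => @specht_form k (wmu i) (nu i))))
              coset_form.

Lemma wbasisE : @wbasis k A cd n nu =
  setX (setX (setXn block_dom) (setXn specht_dom)) (@coset_reps k A cd n nu).
Proof.
apply/setP => -[[x y] g]; rewrite !inE /= andbA; congr (_ && _ && _).
by apply: eq_forallb => j; rewrite inE.
Qed.

Lemma wreath_nondegE : wreath_nondeg cd n nu <->
  form_nondeg (setX (setX (setXn block_dom) (setXn specht_dom)) (@coset_reps k A cd n nu))
    factor_form.
Proof.
have eq_form b b' : wreath_form b b' = factor_form b b'.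
  by rewrite /wreath_form /factor_form /tensor_form /prod_form /coset_form; ring.
rewrite /wreath_nondeg wbasisE.
by split; apply: form_nondeg_ext => b b' _ _; rewrite eq_form.
Qed.

Lemma block_factor_nondeg {j : 'I_n} {i : 'I_r} : in_block i j ->
  form_nondeg (block_dom j) (@tag_form k A cd) <-> cell_nondeg cd i.
Proof.
move=> ij; pose tagi (t : 'I_(d i)) : Sig := Tagged (fun i => 'I_(d i)) t.
have -> : block_dom j = tagi @: [set: 'I_(d i)].
  apply/setP => -[i' t]; rewrite inE; apply/idP/imsetP => [/= i'j | [u _ ->] //].
  by have ei := in_block_uniq ij i'j; subst i'; exists t; rewrite ?inE.
rewrite /cell_nondeg; apply: form_nondeg_image.
  by move=> t u; apply: eq_from_Tagged.
by move=> t u _ _; rewrite /tag_form /= eqxx tagged_asE.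
Qed.

Lemma block_factors_nondeg : (forall i, is_partition (nu i)) ->
  (\sum_(i < r) wmu i)%N = n ->
  (forall j, form_nondeg (block_dom j) (@tag_form k A cd)) <->
  (forall i, nu i != [::] -> cell_nondeg cd i).
Proof.
move=> part sum_n; split=> [nd i nu_i | nd j].
  have [j ij] := block_nonempty sum_n (sumn_partition_gt0 (part i) nu_i).
  exact/(block_factor_nondeg ij).
case: (pickP (in_block^~ j)) => [i ij | no_block]; last by move=> f _ a; rewrite inE no_block.
apply/(block_factor_nondeg ij)/nd; apply: contraTneq (in_block_size_gt0 ij).
by rewrite /Defs.wmu => ->.
Qed.
End WreathCellForm.
Arguments block_factors_nondeg {k A cd n nu}.

Theorem theorem5p4 (k : fieldType) (A : falgType k) (cd : cellular_datum A)
    (n : nat) (nu : 'I_(cd_r cd) -> seq nat) :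
  is_cellular cd ->
  (forall i, is_partition (nu i)) ->
  (\sum_(i < cd_r cd) sumn (nu i))%N = n ->
  wreath_Lambda0 cd n nu ->
  wreath_nondeg cd n nu <->
  (forall i : 'I_(cd_r cd),
     specht_nondeg k (nu i) /\ (nu i != [::] -> cell_nondeg cd i)).
Proof.
(* A basis element x (x) y (x) gamma witnesses that all index sets are nonempty. *)
move=> _ part sum_n [[[x y] g] [_ [+ _ _]]].
rewrite wbasisE => /setXP[xyD gD]; have /setXP[xD yD] := xyD.
rewrite wreath_nondegE /factor_form (tensor_form_nondeg _ _ xyD gD).
rewrite (tensor_form_nondeg _ _ xD yD) (prod_form_nondeg _ xD) (prod_form_nondeg _ yD).
rewrite (block_factors_nondeg part sum_n).
split=> [[[ndX ndY] _] i | nd]; first by split; [exact: ndY | exact: ndX].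
split; last exact: delta_form_nondeg.
by split=> i; [exact: (proj2 (nd i)) | exact: (proj1 (nd i))].
Qed.
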